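(* Let $E$ be a finite non-abelian $p$-group of nilpotency class $2$ with cyclic centre. For $n\ge0$ let $E_n=E^{p^n}$ with coordinates indexed by $1,\dots,p^n$, $Z_n=Z(E_n)$, $F_n=\{(x^{(i)})\in Z_n:x^{(1)}\cdots x^{(p^n)}=1\}$, $K_n=E_n/F_n$, $L_n=Z_n/F_n$. Let $J_n=K_n\rtimes\langle\alpha_n\rangle$, where $\alpha_n$ has order $p^n$ and acts by the cyclic shift induced from $E_n$: conjugation by $\alpha_n$ sends $x=(x^{(i)})$ to $y$ with $y^{(i)}=x^{(i-1)}$, indices mod $p^n$ in $\{1,\dots,p^n\}$ (so $J_n$ is the wreath-central product of $E$ with $C_{p^n}$). For $n\ge1$ define $\varphi_n:E_n\to E_{n-1}$ by letting the $i$-th coordinate of $\varphi_n(x)$ be $\prod_{r\equiv i\ (\mathrm{mod}\ p^{n-1})}x^{(r)}$, factors in increasing order of $r$. Then $\varphi_n$ induces a homomorphism $\psi_n:K_n/L_n\cong E_n/Z_n\to E_{n-1}/Z_{n-1}\cong K_{n-1}/L_{n-1}$, and $\psi_n$ extends, via $\psi_n(\alpha_n)=\alpha_{n-1}$, to a homomorphism $J_n/L_n\to J_{n-1}/L_{n-1}$. *)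

From HB Require Import structures.
From mathcomp Require Import all_boot all_order all_algebra all_fingroup all_solvable.

Set Implicit Arguments.
Unset Strict Implicit.
Unset Printing Implicit Defensive.

Import GRing.Theory.

(* Coordinates 1..N (N = m.+1) are represented by 'I_m.+1 via i |-> i+1. *)
Section Defs.
Variable gT : finGroupType.
Variable m : nat.

Definition fpow := {ffun 'I_m.+1 -> gT}.
HB.instance Definition _ := Finite.on fpow.

Definition fpow_mul (x y : fpow) : fpow := [ffun i => (x i * y i)%g].
Definition fpow_one : fpow := [ffun => 1%g].
Definition fpow_inv (x : fpow) : fpow := [ffun i => ((x i)^-1)%g].

Lemma fpow_mulA : associative fpow_mul.
Proof. by move=> x y z; apply/ffunP=> i; rewrite !ffunE mulgA. Qed.
Lemma fpow_mul1 : left_id fpow_one fpow_mul.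
Proof. by move=> x; apply/ffunP=> i; rewrite !ffunE mul1g. Qed.
Lemma fpow_mulV : left_inverse fpow_one fpow_inv fpow_mul.
Proof. by move=> x; apply/ffunP=> i; rewrite !ffunE mulVg. Qed.

HB.instance Definition _ := Finite_isGroup.Build fpow fpow_mulA fpow_mul1 fpow_mulV.

Definition shift (a : 'I_m.+1) (x : fpow) : fpow := [ffun i => x (i - a)%R].

(* E^(m+1) semidirect <alpha>, alpha of order m.+1 acting by the shift;
   (x, a) stands for x * alpha^a, and alpha x alpha^-1 = shift 1 x *)
Definition wr := (fpow * 'I_m.+1)%type.
HB.instance Definition _ := Finite.on wr.

Definition wr_mul (u v : wr) : wr := ((u.1 * shift u.2 v.1)%g, (u.2 + v.2)%R).
Definition wr_one : wr := (1%g, 0%R).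
Definition wr_inv (u : wr) : wr := (shift (- u.2)%R (u.1^-1)%g, (- u.2)%R).

Lemma shiftM a (x y : fpow) : shift a (x * y)%g = (shift a x * shift a y)%g.
Proof. by apply/ffunP=> i; rewrite !ffunE. Qed.
Lemma shiftV a (x : fpow) : shift a (x^-1)%g = ((shift a x)^-1)%g.
Proof. by apply/ffunP=> i; rewrite !ffunE. Qed.
Lemma shift_shift a b (x : fpow) : shift a (shift b x) = shift (a + b)%R x.
Proof. by apply/ffunP=> i; rewrite !ffunE opprD addrA. Qed.
Lemma shift0 (x : fpow) : shift 0%R x = x.
Proof. by apply/ffunP=> i; rewrite !ffunE subr0. Qed.

Lemma wr_mulA : associative wr_mul.
Proof.
move=> [x a] [y b] [z c]; rewrite /wr_mul /=.
by rewrite shiftM shift_shift mulgA addrA.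
Qed.
Lemma wr_mul1 : left_id wr_one wr_mul.
Proof. by move=> [x a]; rewrite /wr_mul /= shift0 mul1g add0r. Qed.
Lemma wr_mulV : left_inverse wr_one wr_inv wr_mul.
Proof.
by move=> [x a]; rewrite /wr_mul /= -shiftM mulVg addNr; congr pair;
  apply/ffunP=> i; rewrite !ffunE.
Qed.

HB.instance Definition _ := Finite_isGroup.Build wr wr_mulA wr_mul1 wr_mulV.

Definition inEn (x : fpow) : wr := (x, 0%R).
Definition alpha : wr := (1%g, inZp 1).

Definition Zn : {set fpow} := ('Z([set: fpow]))%g.
Definition Fn : {set fpow} := [set z in Zn | (\prod_(i < m.+1) z i)%g == 1%g].

Definition Zw : {set wr} := inEn @: Zn.
Definition Fw : {set wr} := inEn @: Fn.

(* J_n = K_n semidirect <alpha_n>, realised as (E_n semidirect <alpha_n>)/F_n;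
   L_n = Z_n/F_n inside J_n *)
Definition Jn := ([set: wr] / Fw)%g.
Definition Ln := (Zw / Fw)%g.
Definition JLn := (Jn / Ln)%g.
Definition clsJL (u : wr) := coset Ln (coset Fw u).

End Defs.

Definition phi (gT : finGroupType) (m k : nat) (x : fpow gT m) : fpow gT k :=
  [ffun i : 'I_k.+1 => (\prod_(r < m.+1 | r %% k.+1 == i) x r)%g].

(* the number of coordinates of E_n is p^n = (pn p n).+1 *)
Definition pn (p n : nat) := (p ^ n).-1.

From HB Require Import structures.
From mathcomp Require Import all_boot all_order all_algebra all_fingroup all_solvable.

Set Implicit Arguments.
Unset Strict Implicit.
Unset Printing Implicit Defensive.

Import GRing.Theory.
Local Open Scope group_scope.

(* Class 2 means that E/Z(E) is abelian, and E_n/Z_n is the coordinatewise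
   power of E/Z(E). Modulo centres, phi is therefore a product of commuting
   factors: it is a homomorphism, and it intertwines the shift by a on p^n
   coordinates with the shift by a mod p^(n-1), which gives the extension by
   alpha_n |-> alpha_(n-1). The shifts preserve F_n because the product of
   central coordinates does not depend on their cyclic order, so F_n and Z_n
   are normal in E_n semidirect <alpha_n> and the two quotients can be taken
   in stages. *)

Section Coordinates.
Variables (T : finGroupType) (m : nat).

Lemma fpowM (x y : fpow T m) i : (x * y) i = x i * y i.
Proof. exact: ffunE. Qed.

Lemma fpow1 i : (1 : fpow T m) i = 1.
Proof. exact: ffunE. Qed.

Lemma fpowV (x : fpow T m) i : x^-1 i = (x i)^-1.
Proof. exact: ffunE. Qed.

Lemma shiftE a (x : fpow T m) i : shift a x i = x (i - a)%R.
Proof. exact: ffunE. Qed.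

Lemma shift1 a : shift a (1 : fpow T m) = 1.
Proof. by apply/ffunP=> i; rewrite shiftE !fpow1. Qed.

Lemma wrM (u v : wr T m) : u * v = (u.1 * shift u.2 v.1, (u.2 + v.2)%R).
Proof. by []. Qed.

Lemma wrV (u : wr T m) : u^-1 = (shift (- u.2)%R u.1^-1, (- u.2)%R).
Proof. by []. Qed.

End Coordinates.

Section Reduction.
Variables m k : nat.

Definition reduce (a : 'I_m.+1) : 'I_k.+1 := inZp a.

Lemma reduce0 : reduce 0%R = 0%R.
Proof. exact: val_inj. Qed.

Hypothesis dvd_km : k.+1 %| m.+1.

Lemma reduceD a b : reduce (a + b)%R = (reduce a + reduce b)%R.
Proof. by apply: val_inj; rewrite /= modn_dvdm // modnDm. Qed.

Lemma reduce1 : reduce (inZp 1) = inZp 1.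
Proof. by apply: val_inj; rewrite /= modn_dvdm. Qed.

End Reduction.

Lemma phi1 (T : finGroupType) m k : phi k (1 : fpow T m) = 1.
Proof. by apply/ffunP=> i; rewrite fpow1 ffunE big1 // => r _; rewrite fpow1. Qed.

Section CommutativeCoordinates.
Variable B : finGroupType.
Hypothesis cB : commutative (@mulg B).

HB.instance Definition _ := Monoid.isComLaw.Build B 1 mulg (@mulgA B) cB (@mul1g B).

Lemma phiM m k (x y : fpow B m) : phi k (x * y) = phi k x * phi k y.
Proof.
apply/ffunP=> i; rewrite fpowM !ffunE -big_split.
by apply: eq_bigr => r _; rewrite fpowM.
Qed.

Lemma reindex_addr m (a : 'I_m.+1) (P : pred 'I_m.+1) (F : 'I_m.+1 -> B) :
  \prod_(r | P r) F r = \prod_(r | P (r + a)%R) F (r + a)%R.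
Proof.
rewrite (reindex (fun r => r + a)%R) //.
by exists (fun r => r - a)%R => r _; rewrite ?subrK ?addrK.
Qed.

Lemma phi_shift m k (a : 'I_m.+1) (x : fpow B m) :
  k.+1 %| m.+1 -> phi k (shift a x) = shift (reduce k a) (phi k x).
Proof.
move=> dvd_km; apply/ffunP=> i; rewrite shiftE !ffunE (reindex_addr a).
apply: eq_big => r; last by rewrite shiftE addrK.
rewrite -[_ %% _]/(val (reduce k _)) -[r %% _]/(val (reduce k r)) !val_eqE.
by rewrite reduceD //; apply/eqP/eqP => [<- | ->]; rewrite ?addrK ?subrK.
Qed.

Lemma prod_shift m (a : 'I_m.+1) (x : fpow B m) :
  \prod_(i < m.+1) shift a x i = \prod_(i < m.+1) x i.
Proof. by rewrite (reindex_addr a); apply: eq_bigr => r _; rewrite shiftE addrK. Qed.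

End CommutativeCoordinates.

Lemma prod_shift_abelian (T : finGroupType) (H : {group T}) m (a : 'I_m.+1)
    (x : fpow T m) :
  abelian H -> (forall i, x i \in H) ->
  \prod_(i < m.+1) shift a x i = \prod_(i < m.+1) x i.
Proof.
move=> cHH xH.
have cS : commutative (@mulg (subg_of H)).
  by move=> u v; apply: val_inj; apply: (centsP cHH); apply: subgP.
pose xS : fpow (subg_of H) m := [ffun i => subg H (x i)].
have val_prod (F : 'I_m.+1 -> subg_of H) :
    sgval (\prod_(i < m.+1) F i) = \prod_(i < m.+1) sgval (F i).
  exact: (big_morph sgval).
have xSE i : sgval (xS i) = x i by rewrite ffunE subgK.
transitivity (sgval (\prod_(i < m.+1) shift a xS i)).
  by rewrite val_prod; apply: eq_bigr => i _; rewrite !shiftE xSE.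
by rewrite (prod_shift cS) val_prod; apply: eq_bigr => i _; rewrite xSE.
Qed.

Lemma abelian_center_quotient (T : finGroupType) (G : {group T}) :
  nil_class G <= 2 -> abelian (G / 'Z(G)).
Proof. by rewrite nil_class2; apply: sub_der1_abelian. Qed.

Lemma normsT_center (T : finGroupType) : [set: T] \subset 'N('Z([set: T])).
Proof. exact/normal_norm/center_normal. Qed.

Lemma norm_center (T : finGroupType) (x : T) : x \in 'N('Z([set: T])).
Proof. exact: subsetP (normsT_center T) x (in_setT x). Qed.

Section CenterQuotient.
Variable gT : finGroupType.
Hypothesis cEZ : abelian ([set: gT] / 'Z([set: gT])).

Local Notation Z := 'Z([set: gT]).
Local Notation EZ := (coset_of Z).

Lemma commutative_center_quotient : commutative (@mulg EZ).
Proof. by move=> a b; apply: (centsP cEZ); rewrite quotientT inE. Qed.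

Definition cosetZ m (x : fpow gT m) : fpow EZ m := [ffun i => coset Z (x i)].

Lemma cosetZE m (x : fpow gT m) i : cosetZ x i = coset Z (x i).
Proof. exact: ffunE. Qed.

Lemma cosetZM m (x y : fpow gT m) : cosetZ (x * y) = cosetZ x * cosetZ y.
Proof. by apply/ffunP=> i; rewrite fpowM !cosetZE fpowM morphM ?norm_center. Qed.

Lemma cosetZV m (x : fpow gT m) : cosetZ x^-1 = (cosetZ x)^-1.
Proof. by apply/ffunP=> i; rewrite fpowV !cosetZE fpowV morphV ?norm_center. Qed.

Lemma cosetZ_shift m a (x : fpow gT m) : cosetZ (shift a x) = shift a (cosetZ x).
Proof. by apply/ffunP=> i; rewrite cosetZE !shiftE cosetZE. Qed.

Lemma cosetZ_phi m k (x : fpow gT m) : cosetZ (phi k x) = phi k (cosetZ x).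
Proof.
apply/ffunP=> i; rewrite !ffunE morph_prod => [|r _]; last exact: norm_center.
by apply: eq_bigr => r _; rewrite ffunE.
Qed.

Lemma cosetZ_eq1_coord m (z : fpow gT m) i : cosetZ z = 1 -> z i \in Z.
Proof. by move=> z1; apply: coset_idr (norm_center _) _; rewrite -cosetZE z1 fpow1. Qed.

Lemma mem_Zn m (z : fpow gT m) : (z \in Zn gT m) = (cosetZ z == 1).
Proof.
apply/centerP/eqP => [[_ cz] | z1].
  apply/ffunP=> i; rewrite cosetZE fpow1; apply: coset_id.
  apply/centerP; split=> [|g _]; first by rewrite inE.
  pose y : fpow gT m := [ffun j => if j == i then g else 1].
  have /(congr1 (fun w : fpow gT m => w i)) := cz y (in_setT y).
  by rewrite !fpowM ffunE eqxx.
split=> [|y _]; first by rewrite inE.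
apply/ffunP=> i; rewrite !fpowM.
by have /centerP[_ ->] := cosetZ_eq1_coord i z1.
Qed.

Lemma Zn_coord m (z : fpow gT m) i : z \in Zn gT m -> z i \in Z.
Proof. by rewrite mem_Zn => /eqP; apply: cosetZ_eq1_coord. Qed.

Lemma phi_Zn m k (z : fpow gT m) : z \in Zn gT m -> phi k z \in Zn gT k.
Proof. by rewrite !mem_Zn cosetZ_phi => /eqP->; rewrite phi1. Qed.

Lemma shift_Zn m a (z : fpow gT m) : z \in Zn gT m -> shift a z \in Zn gT m.
Proof. by rewrite !mem_Zn cosetZ_shift => /eqP->; rewrite shift1. Qed.

Lemma shift_Fn m a (z : fpow gT m) : z \in Fn gT m -> shift a z \in Fn gT m.
Proof.
rewrite inE => /andP[Zz z1]; rewrite inE shift_Zn //=.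
by rewrite (prod_shift_abelian _ (center_abelian [set: gT])) // => i; apply: Zn_coord.
Qed.

Lemma conj_inEn m (z : fpow gT m) (u : wr gT m) :
  z \in Zn gT m -> inEn z ^ u = inEn (shift (- u.2)%R z).
Proof.
case: u => y a /centerP[_ cz]; rewrite /conjg wrV !wrM /= add0r addNr shift0.
by congr pair; rewrite -!shiftM (cz y (in_setT y)) mulKg.
Qed.

Lemma norm_Fw m (u : wr gT m) : u \in 'N(Fw gT m).
Proof.
rewrite inE; apply/subsetP => w; rewrite mem_conjg => /imsetP[z Fz Ew].
rewrite -(conjgKV u w) Ew conj_inEn; first by rewrite imset_f ?shift_Fn.
by move: Fz; rewrite inE => /andP[].
Qed.

Lemma norm_Zw m (u : wr gT m) : u \in 'N(Zw gT m).
Proof.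
rewrite inE; apply/subsetP => w; rewrite mem_conjg => /imsetP[z Zz Ew].
by rewrite -(conjgKV u w) Ew conj_inEn // imset_f ?shift_Zn.
Qed.

Lemma norm_Ln m (v : coset_of (Fw gT m)) : v \in 'N(Ln gT m).
Proof.
have [u Nu ->] := cosetP v; apply/normP.
by rewrite -morphimJ // (normP (norm_Zw u)).
Qed.

Lemma normsT_Fw m : [set: wr gT m] \subset 'N(Fw gT m).
Proof. by apply/subsetP => u _; apply: norm_Fw. Qed.

Lemma norms_Ln m : coset (Fw gT m) @* [set: wr gT m] \subset 'N(Ln gT m).
Proof. by apply/subsetP => v _; apply: norm_Ln. Qed.

Lemma clsJLM m (u v : wr gT m) : clsJL (u * v) = clsJL u * clsJL v.
Proof. by rewrite /clsJL morphM ?norm_Fw // morphM ?norm_Ln. Qed.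

Lemma clsJL_Zw m (u : wr gT m) : u \in Zw gT m -> clsJL u = 1.
Proof. by move=> Zu; apply: coset_id; rewrite mem_morphim ?norm_Fw. Qed.

Lemma clsJL_eq m (u v : wr gT m) :
  u.2 = v.2 -> cosetZ u.1 = cosetZ v.1 -> clsJL u = clsJL v.
Proof.
case: u v => [x a] [y b] /= <- xy.
have -> : (x, a) = inEn (x * y^-1) * (y, a) :> wr gT m.
  by rewrite wrM /= shift0 add0r mulgVK.
rewrite clsJLM clsJL_Zw ?mul1g // imset_f //.
by rewrite mem_Zn cosetZM cosetZV xy mulgV.
Qed.

Lemma mem_clsJL m (u : wr gT m) : clsJL u \in JLn gT m.
Proof. by rewrite !mem_morphim ?norm_Fw ?norm_Ln. Qed.

Lemma JLnP m (y : coset_of (Ln gT m)) : y \in JLn gT m -> exists u, y = clsJL u.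
Proof. by case/morphimP => v _ /morphimP[u _ _ ->] ->; exists u. Qed.

Section Folding.
Variables m k : nat.

Definition phi_coset (x : fpow gT m) := coset (Zn gT k) (phi k x).

Lemma phi_cosetM : {in [set: fpow gT m] &, {morph phi_coset : x y / x * y}}.
Proof.
move=> x y _ _; rewrite /phi_coset -morphM ?norm_center //.
have Z_phiM : (phi k x * phi k y)^-1 * phi k (x * y) \in Zn gT k.
  rewrite mem_Zn cosetZM cosetZV cosetZM !cosetZ_phi cosetZM.
  by rewrite (phiM commutative_center_quotient) mulVg.
by rewrite -{1}(mulKVg (phi k x * phi k y) (phi k (x * y))); apply: coset_kerr.
Qed.

Canonical phi_coset_morphism := Morphism phi_cosetM.

Lemma ker_coset_Zn : 'ker (coset (Zn gT m)) \subset 'ker phi_coset_morphism.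
Proof.
rewrite ker_coset; apply/subsetP => z Zz; apply/kerP; first exact: in_setT.
exact/coset_id/phi_Zn.
Qed.

Definition psi := factm_morphism ker_coset_Zn (normsT_center _).

Lemma psi_coset x : psi (coset (Zn gT m) x) = coset (Zn gT k) (phi k x).
Proof. exact: factmE (in_setT x). Qed.

Hypothesis dvd_km : k.+1 %| m.+1.

Definition wr_phi (u : wr gT m) : wr gT k := (phi k u.1, reduce k u.2).

Definition clsJL_phi (u : wr gT m) := clsJL (wr_phi u).

Lemma clsJL_phiM : {in [set: wr gT m] &, {morph clsJL_phi : u v / u * v}}.
Proof.
move=> [x a] [y b] _ _; rewrite /clsJL_phi -clsJLM; apply: clsJL_eq => /=.
  by rewrite reduceD.
have cEZ' := commutative_center_quotient.
rewrite cosetZ_phi !cosetZM !cosetZ_shift !cosetZ_phi.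
by rewrite (phiM cEZ') (phi_shift cEZ').
Qed.

Canonical clsJL_phi_morphism := Morphism clsJL_phiM.

Lemma clsJL_phi_Zw u : u \in Zw gT m -> clsJL_phi_morphism u = 1.
Proof.
case/imsetP => z Zz ->; rewrite /= /clsJL_phi /wr_phi reduce0.
by rewrite clsJL_Zw ?imset_f ?phi_Zn.
Qed.

Lemma ker_coset_Fw : 'ker (coset (Fw gT m)) \subset 'ker clsJL_phi_morphism.
Proof.
rewrite ker_coset_prim (subset_trans (subsetIl _ _)) // gen_subG.
apply/subsetP => w Fw_w; apply/kerP; first exact: in_setT.
apply: clsJL_phi_Zw; case/imsetP: Fw_w => z Fz ->.
by rewrite imset_f //; move: Fz; rewrite inE => /andP[].
Qed.

Let psiK := factm_morphism ker_coset_Fw (normsT_Fw m).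

Lemma ker_coset_Ln : 'ker (coset (Ln gT m)) \subset 'ker psiK.
Proof.
rewrite ker_coset_prim (subset_trans (subsetIl _ _)) // gen_subG.
apply/subsetP => v Lv; have [u _ Zu ->] := morphimP Lv.
apply/kerP; first by rewrite mem_morphim ?norm_Fw.
exact: etrans (factmE _ _ (in_setT u)) (clsJL_phi_Zw Zu).
Qed.

Definition psiJ := factm_morphism ker_coset_Ln (norms_Ln m).

Lemma psiJ_clsJL u : psiJ (clsJL u) = clsJL (wr_phi u).
Proof.
have Fu : coset (Fw gT m) u \in coset (Fw gT m) @* [set: wr gT m].
  by rewrite mem_morphim ?norm_Fw.
exact: etrans (factmE _ _ Fu) (factmE _ _ (in_setT u)).
Qed.

Lemma psiJ_image : psiJ @* JLn gT m \subset JLn gT k.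
Proof.
apply/subsetP => y /morphimP[v _ /JLnP[u ->] ->].
by rewrite psiJ_clsJL mem_clsJL.
Qed.

End Folding.
End CenterQuotient.

Theorem theorem4p3 (gT : finGroupType) (p n : nat) :
  prime p -> (p.-group [set: gT])%g -> ~~ abelian [set: gT] ->
  nil_class [set: gT] = 2 -> cyclic ('Z([set: gT]))%g -> 0 < n ->
  (* phi_n induces psi_n : E_n / Z_n -> E_{n-1} / Z_{n-1} *)
  (exists g : {morphism ([set: fpow gT (pn p n)] / Zn gT (pn p n))%g
                >-> coset_of (Zn gT (pn p n.-1))},
     forall x : fpow gT (pn p n),
       g (coset (Zn gT (pn p n)) x)
       = coset (Zn gT (pn p n.-1)) (phi (pn p n.-1) x))
  /\
  (* psi_n extends, with alpha_n |-> alpha_{n-1}, to J_n/L_n -> J_{n-1}/L_{n-1} *)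
  (exists f : {morphism JLn gT (pn p n) >-> coset_of (Ln gT (pn p n.-1))},
     [/\ (f @* JLn gT (pn p n) \subset JLn gT (pn p n.-1))%g,
         forall x : fpow gT (pn p n),
           f (clsJL (inEn x)) = clsJL (inEn (phi (pn p n.-1) x))
       & f (clsJL (alpha gT (pn p n))) = clsJL (alpha gT (pn p n.-1))]).
Proof.
move=> p_pr _ _ cl2 _ n_gt0.
have cEZ : abelian ([set: gT] / 'Z([set: gT])).
  by apply: abelian_center_quotient; rewrite cl2.
have dvd_pn : (pn p n.-1).+1 %| (pn p n).+1.
  by rewrite /pn !prednK ?expn_gt0 ?prime_gt0 // dvdn_exp2l // leq_pred.
split; first by exists (psi cEZ _ _); apply: psi_coset.
exists (psiJ cEZ dvd_pn); split; first exact: psiJ_image.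
  by move=> x; rewrite psiJ_clsJL /wr_phi /= reduce0.
by rewrite psiJ_clsJL /wr_phi /= reduce1 // phi1.
Qed.
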